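(* Let $\epsilon, b \in \mathbb{C}$ with $\epsilon \neq 0$. Consider the map $\Phi:(x,y)\mapsto(\widetilde x,\widetilde y)$ of $\mathbb{C}^2$ defined implicitly by the system \[ \frac{\widetilde x - x}{\epsilon}=\widetilde x\, y+x\,\widetilde y, \qquad \frac{\widetilde y - y}{\epsilon}= b+x\widetilde x -(2-\epsilon^2b)\, y\widetilde y, \] which is linear in $(\widetilde x,\widetilde y)$ and so defines a rational map (birational). Then $\Phi$ is integrable in the sense that the rational function \[ H(x,y;\epsilon)=\frac{x^2\big((1-\tfrac{1}{2}\epsilon^2b)y^2-\tfrac{1}{4}(1-\epsilon^2b)x^2-\tfrac{1}{2}b\big)}{\big(1+\epsilon(y+x)\big)\big(1+\epsilon(y-x)\big)\big(1-\epsilon(y+x)\big)\big(1-\epsilon(y-x)\big)} \] is an integral of motion of $\Phi$: $H(\widetilde x,\widetilde y;\epsilon)=H(x,y;\epsilon)$ for all $(x,y)$ at which $\Phi$ and both sides are defined.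
   Context: This map is a modification of the Kahan discretization of the planar system $\dot x=2xy$, $\dot y=b+x^2-2y^2$ (whose standard Kahan discretization has coefficient $2$ instead of $2-\epsilon^2 b$ in front of $y\widetilde y$). An integral of motion of a map $\Phi$ is a (nonconstant) function $H$ with $H\circ\Phi=H$. *)

(* The complex field C is modelled by an arbitrary
   numClosedFieldType (algebraically closed field of characteristic 0,
   e.g. algC); the claim is a rational identity, so this covers C. *)
From HB Require Import structures.
From mathcomp Require Import all_boot all_order all_algebra.
Set Implicit Arguments. Unset Strict Implicit. Unset Printing Implicit Defensive.
Import Order.TTheory GRing.Theory Num.Theory.
Local Open Scope ring_scope.

Definition Hden (R : numClosedFieldType) (e x y : R) : R :=
  (1 + e * (y + x)) * (1 + e * (y - x)) * (1 - e * (y + x)) * (1 - e * (y - x)).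

Definition Hnum (R : numClosedFieldType) (e b x y : R) : R :=
  x ^+ 2 * ((1 - e ^+ 2 * b / 2) * y ^+ 2 - (1 - e ^+ 2 * b) * x ^+ 2 / 4 - b / 2).

Definition H (R : numClosedFieldType) (e b x y : R) : R :=
  Hnum e b x y / Hden e x y.

(* Determinant of the linear system defining (xt, yt) from (x, y):
     (1 - e y) xt - e x yt = x,
     - e x xt + (1 + e (2 - e^2 b) y) yt = y + e b.
   The map Phi is defined exactly where this is nonzero. *)
Definition Phi_det (R : numClosedFieldType) (e b x y : R) : R :=
  (1 - e * y) * (1 + e * (2 - e ^+ 2 * b) * y) - e ^+ 2 * x ^+ 2.

(* Clearing denominators, the defining relations of Phi form a linear
   system in (xt, yt) with determinant [Phi_det e b x y]; Cramer's rule
   gives xt and yt as explicit rational functions of (x, y), and the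
   invariance of H is then an identity between rational functions. *)
From HB Require Import structures.
From mathcomp Require Import all_boot all_order all_algebra.
From mathcomp Require Import ring.

Set Implicit Arguments.
Unset Strict Implicit.
Unset Printing Implicit Defensive.

Import Order.TTheory GRing.Theory Num.Theory.
Local Open Scope ring_scope.

Lemma cramer2 (F : fieldType) (a11 a12 a21 a22 r1 r2 u v : F) :
  a11 * a22 - a12 * a21 != 0 ->
  a11 * u + a12 * v = r1 -> a21 * u + a22 * v = r2 ->
  u = (a22 * r1 - a12 * r2) / (a11 * a22 - a12 * a21) /\
  v = (a11 * r2 - a21 * r1) / (a11 * a22 - a12 * a21).
Proof.
move=> det0 <- <-; split; apply: (mulIf det0); rewrite mulfVK //; ring.
Qed.

Section KahanMap.

Variables (R : numClosedFieldType) (e b : R).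

Definition Phi_x (x y : R) : R :=
  x * (1 + e * (3 - e ^+ 2 * b) * y + e ^+ 2 * b) / Phi_det e b x y.

Definition Phi_y (x y : R) : R :=
  ((1 - e * y) * (y + e * b) + e * x ^+ 2) / Phi_det e b x y.

Lemma Phi_solves (x y xt yt : R) :
  e != 0 -> Phi_det e b x y != 0 ->
  (xt - x) / e = xt * y + x * yt ->
  (yt - y) / e = b + x * xt - (2 - e ^+ 2 * b) * y * yt ->
  xt = Phi_x x y /\ yt = Phi_y x y.
Proof.
move=> e0 det0 Ex Ey.
have Lx : (1 - e * y) * xt + (- (e * x)) * yt = x.
  have Ex' : xt - x = e * (xt * y + x * yt) by rewrite -Ex; field.
  transitivity (x + ((xt - x) - e * (xt * y + x * yt))); first ring.
  by rewrite Ex' subrr addr0.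
have Ly : (- (e * x)) * xt + (1 + e * (2 - e ^+ 2 * b) * y) * yt = y + e * b.
  have Ey' : yt - y = e * (b + x * xt - (2 - e ^+ 2 * b) * y * yt).
    by rewrite -Ey; field.
  transitivity (y + e * b
    + ((yt - y) - e * (b + x * xt - (2 - e ^+ 2 * b) * y * yt))); first ring.
  by rewrite Ey' subrr addr0.
have det_eq : (1 - e * y) * (1 + e * (2 - e ^+ 2 * b) * y)
    - (- (e * x)) * (- (e * x)) = Phi_det e b x y by rewrite /Phi_det; ring.
rewrite -det_eq in det0.
have [-> ->] := cramer2 det0 Lx Ly.
by rewrite det_eq /Phi_x /Phi_y; split; congr (_ / _); ring.
Qed.

Lemma H_Phi_cross (x y : R) :
  Phi_det e b x y != 0 ->
  Hnum e b (Phi_x x y) (Phi_y x y) * Hden e x y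
  = Hnum e b x y * Hden e (Phi_x x y) (Phi_y x y).
Proof.
rewrite /Phi_det => det0; rewrite /Phi_x /Phi_y /Hnum /Hden /Phi_det.
by field; rewrite exprMn.
Qed.

End KahanMap.

Theorem theorem1 (R : numClosedFieldType) (e b x y xt yt : R) :
  e != 0 ->
  Phi_det e b x y != 0 ->
  (xt - x) / e = xt * y + x * yt ->
  (yt - y) / e = b + x * xt - (2 - e ^+ 2 * b) * y * yt ->
  Hden e x y != 0 ->
  Hden e xt yt != 0 ->
  H e b xt yt = H e b x y.
Proof.
move=> e0 det0 Ex Ey den0 dent0.
have [xtE ytE] := Phi_solves e0 det0 Ex Ey.
rewrite /H; apply/eqP; rewrite eqr_div //; apply/eqP.
by rewrite xtE ytE H_Phi_cross.
Qed.
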